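(* Let $0<p\le1$ and let $\rho$ be a function quasi-norm over a $\sigma$-finite measure space $(\Omega,\Sigma,\mu)$ which is $p$-convex and has the weak Fatou property. Then $\rho$ has the Riesz–Fischer $p$-property.
   Context: $L_0^+(\mu)$: measurable functions $\Omega\to[0,\infty]$ modulo a.e. equality. A function quasi-norm is $\rho\colon L_0^+(\mu)\to[0,\infty]$ with (F1) $\rho(tf)=t\rho(f)$, $t\ge0$; (F2) $f\le g$ a.e. $\Rightarrow\rho(f)\le\rho(g)$; (F3) $\rho(\chi_E)<\infty$ if $\mu(E)<\infty$; (F4) for all $E$ with $\mu(E)<\infty$ and $\varepsilon>0$ there is $\delta>0$ with $\mu(A)\le\varepsilon$ whenever $A\subseteq E$ measurable and $\rho(\chi_A)\le\delta$; (F5) $\rho(f+g)\le\kappa(\rho(f)+\rho(g))$. $\rho$ is $p$-convex if there is $C$ with $\rho^p(\sum_{j=1}^nf_j)\le C\sum_{j=1}^n\rho^p(f_j)$ for all $n$ and $f_j\in L_0^+(\mu)$. Weak Fatou property: $\rho(\lim f_n)<\infty$ whenever $(f_n)$ is non-decreasing with $\lim\rho(f_n)<\infty$. Riesz–Fischer $p$-property: for every sequence $(f_n)$ in $L_0^+(\mu)$ with $\sum_n\rho^p(f_n)<\infty$ one has $\rho(\sum_nf_n)<\infty$. *)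

From HB Require Import structures.
From mathcomp Require Import all_boot all_order all_algebra.
From mathcomp Require Import all_classical all_reals all_analysis measurable_realfun.
Set Implicit Arguments. Unset Strict Implicit. Unset Printing Implicit Defensive.
Import Order.TTheory GRing.Theory Num.Theory.
Local Open Scope classical_set_scope.
Local Open Scope ring_scope.
Local Open Scope ereal_scope.

Section FQN.
Context {d : measure_display} {T : measurableType d} {R : realType}.
Variable mu : {measure set T -> \bar R}.

(* Elements of L_0^+(mu): measurable functions T -> [0, +oo].
   Functionals rho are defined on all T -> \bar R; all axioms only concern L_0^+.
   Identification modulo a.e. equality is enforced by (F2), stated with a.e. order. *)
Definition L0p (f : T -> \bar R) : Prop :=
  measurable_fun [set: T] f /\ (forall x, 0 <= f x).

Definition chi (A : set T) : T -> \bar R := fun x => (\1_A x)%:E.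

Definition function_quasi_norm (rho : (T -> \bar R) -> \bar R) : Prop :=
  (forall f, L0p f -> 0 <= rho f) /\
  (forall (t : R) f, (0 <= t)%R -> L0p f ->
      rho (fun x => t%:E * f x) = t%:E * rho f) /\
  (forall f g, L0p f -> L0p g -> {ae mu, forall x, f x <= g x} -> rho f <= rho g) /\
  (forall E, measurable E -> mu E < +oo -> rho (chi E) < +oo) /\
  (forall E, measurable E -> mu E < +oo -> forall eps : R, (0 < eps)%R ->
     exists2 delta : R, (0 < delta)%R &
       forall A, measurable A -> A `<=` E -> rho (chi A) <= delta%:E -> mu A <= eps%:E) /\
  (exists kappa : R, forall f g, L0p f -> L0p g ->
      rho (fun x => f x + g x) <= kappa%:E * (rho f + rho g)).

Definition p_convex (p : R) (rho : (T -> \bar R) -> \bar R) : Prop :=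
  exists C : R, forall (n : nat) (f : nat -> T -> \bar R),
    (forall j, L0p (f j)) ->
    poweR (rho (fun x => \sum_(j < n) f j x)) p <= C%:E * \sum_(j < n) poweR (rho (f j)) p.

Definition weak_Fatou (rho : (T -> \bar R) -> \bar R) : Prop :=
  forall f : nat -> T -> \bar R,
    (forall n, L0p (f n)) -> (forall n x, f n x <= f n.+1 x) ->
    limn (fun n => rho (f n)) < +oo ->
    rho (fun x => limn (fun n => f n x)) < +oo.

Definition Riesz_Fischer_p (p : R) (rho : (T -> \bar R) -> \bar R) : Prop :=
  forall f : nat -> T -> \bar R,
    (forall n, L0p (f n)) ->
    \sum_(n <oo) poweR (rho (f n)) p < +oo ->
    rho (fun x => \sum_(n <oo) f n x) < +oo.

End FQN.

From HB Require Import structures.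
From mathcomp Require Import all_boot all_order all_algebra.
From mathcomp Require Import all_classical all_reals all_analysis measurable_realfun.
Set Implicit Arguments. Unset Strict Implicit. Unset Printing Implicit Defensive.
Import Order.TTheory GRing.Theory Num.Theory.
Local Open Scope classical_set_scope.
Local Open Scope ring_scope.

(* Let F_n be the partial sums of (f_n). By p-convexity,
   rho(F_n)^p <= C * sum_j rho(f_j)^p, so the nondecreasing sequence rho(F_n)
   is bounded; the weak Fatou property then bounds rho(sup_n F_n). *)

Section poweR_monotone.
Context {R : realType}.
Local Open Scope ereal_scope.

Lemma ge0_lee_poweR (r : R) (x y : \bar R) :
  (0 <= r)%R -> 0 <= x -> x <= y -> x `^ r <= y `^ r.
Proof.
move=> r_ge0 x_ge0 le_xy; have [->|r_neq0] := eqVneq r 0%R.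
  by rewrite !poweRe0.
case: y le_xy => [y||]; last by move=> /(le_trans x_ge0).
- case: x x_ge0 => [x||] //; rewrite !lee_fin => x_ge0 le_xy.
  by rewrite ge0_ler_powR ?nnegrE// (le_trans x_ge0).
- by move=> _; rewrite poweRyr // leey.
Qed.

Lemma poweR_le_root (p b : R) (x : \bar R) :
  (0 < p)%R -> 0 <= x -> x `^ p <= b%:E -> x <= (b `^ p^-1)%:E.
Proof.
move=> p_gt0 x_ge0; have pV_ge0 : (0 <= p^-1)%R by rewrite invr_ge0 ltW.
move=> /(ge0_lee_poweR pV_ge0 (poweR_ge0 _ _)).
by rewrite -poweRrM mulfV ?gt_eqF // poweRe1 // poweR_EFin.
Qed.

End poweR_monotone.

Section Riesz_Fischer.
Context {d : measure_display} {T : measurableType d} {R : realType}.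
Variables (mu : {measure set T -> \bar R}) (rho : (T -> \bar R) -> \bar R).
Local Open Scope ereal_scope.

Lemma L0p_partial_sum (f : nat -> T -> \bar R) (n : nat) :
  (forall j, L0p (f j)) -> L0p (fun x => \sum_(j < n) f j x).
Proof.
move=> Lf; split; first by apply: emeasurable_sum => j; case: (Lf j).
by move=> x; apply: sume_ge0 => j _; case: (Lf j).
Qed.

Lemma partial_sum_nondecreasing (f : nat -> T -> \bar R) (x : T) :
  (forall j, L0p (f j)) ->
  {homo (fun n => \sum_(j < n) f j x) : m n / (m <= n)%N >-> m <= n}.
Proof.
move=> Lf; apply: (lee_sum_nneg_ord (fun j => f j x) xpredT) => j _.
by case: (Lf j).
Qed.

Lemma p_convex_partial_sum_bounded (p : R) (f : nat -> T -> \bar R) :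
  p_convex p rho -> (forall j, L0p (f j)) ->
  \sum_(n <oo) rho (f n) `^ p < +oo ->
  exists B : R, forall n, rho (fun x => \sum_(j < n) f j x) `^ p <= B%:E.
Proof.
move=> [C convex] Lf sum_fin.
have sum_ge0 : 0 <= \sum_(n <oo) rho (f n) `^ p.
  by apply: nneseries_ge0 => *; exact: poweR_ge0.
exists (`|C| * fine (\sum_(n <oo) rho (f n) `^ p))%R => n.
apply: (le_trans (convex n f Lf)); apply: (le_trans (lee_abs _)).
rewrite abseM EFinM fineK ?ge0_fin_numE //; apply: lee_pmul => //.
rewrite gee0_abs; last by apply: sume_ge0 => j _; exact: poweR_ge0.
rewrite -(big_mkord xpredT (fun j => rho (f j) `^ p)).
by apply: nneseries_lim_ge => j _ _; exact: poweR_ge0.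
Qed.

Hypothesis rho_fqn : function_quasi_norm mu rho.

Lemma function_quasi_norm_ge0 (f : T -> \bar R) : L0p f -> 0 <= rho f.
Proof. by case: rho_fqn => ge0 _; exact: ge0. Qed.

Lemma function_quasi_norm_le (f g : T -> \bar R) :
  L0p f -> L0p g -> (forall x, f x <= g x) -> rho f <= rho g.
Proof.
by case: rho_fqn => _ [_ [le _]] Lf Lg le_fg; apply: le => //; exact: aeW.
Qed.

Lemma weak_Fatou_bounded (F : nat -> T -> \bar R) (B : R) :
  weak_Fatou rho -> (forall n, L0p (F n)) -> (forall n x, F n x <= F n.+1 x) ->
  (forall n, rho (F n) <= B%:E) -> rho (fun x => limn (fun n => F n x)) < +oo.
Proof.
move=> fatou LF F_nd rho_le; apply: fatou => //.
have rho_nd : nondecreasing_seq (fun n => rho (F n)).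
  apply/nondecreasing_seqP => n.
  by apply: function_quasi_norm_le => // x; exact: F_nd.
apply: (le_lt_trans _ (ltry B)); apply: lime_le.
  exact: ereal_nondecreasing_is_cvgn.
exact: nearW.
Qed.

End Riesz_Fischer.

Theorem lemma3p18 (d : measure_display) (T : measurableType d) (R : realType)
  (mu : {measure set T -> \bar R}) (p : R) (rho : (T -> \bar R) -> \bar R) :
  sigma_finite setT mu ->
  0 < p <= 1 ->
  function_quasi_norm mu rho ->
  p_convex p rho ->
  weak_Fatou rho ->
  Riesz_Fischer_p p rho.
Proof.
move=> _ /andP[p_gt0 _] rho_fqn convex fatou f Lf sum_fin.
have [B bound] := p_convex_partial_sum_bounded convex Lf sum_fin.
have LF n := L0p_partial_sum n Lf.
suff -> : (fun x => \sum_(n <oo) f n x)%E =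
    (fun x => limn (fun n => \sum_(j < n) f j x))%E.
  apply: (weak_Fatou_bounded rho_fqn fatou LF).
  - by move=> n x; exact: partial_sum_nondecreasing.
  - move=> n; have rho_ge0 := function_quasi_norm_ge0 rho_fqn (LF n).
    exact: poweR_le_root p_gt0 rho_ge0 (bound n).
apply: funext => x; congr (limn _); apply: funext => n.
by rewrite -(big_mkord xpredT (fun j => f j x)).
Qed.
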